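(* Let $n\ge 2$ and let $\sigma_{n-1}=c_{n-1}-\lfloor\frac{n-1}{2}\rfloor$, where $c_{n-1}=\binom{n-1}{2}$. As elements of $R/J_n$: if $n$ is even, then $x_{nn}^{\sigma_{n-1}}\,p^+_{n}=p_n$; if $n$ is odd, then for every $i\in[n]$, $x_{nn}^{\sigma_{n-1}+1}\,p^+_{n,i}=x_{in}\,p_n$.
   Context: Let $\mathbbm{k}$ be a field, $[n]=\{1,\dots,n\}$, $R=\mathbbm{k}[x_{ij}:1\le i\le j\le n]$ with $x_{ij}=x_{ji}$; exponent vectors in $\mathbb{N}^{\binom{n+1}{2}}$ with basis $e_{ij}=e_{ji}$. $V_n$ is the $n\times\binom{n+1}{2}$ matrix whose column indexed by $jk$ is $e_j+e_k\in\mathbb{Z}^n$; for $\mathbf b\in\mathbb{N}^n$, $V_n^{-1}[\mathbf b]=\{u\in\mathbb{N}^{\binom{n+1}{2}}:V_nu=\mathbf b\}$. $J_n$ is generated by the principal $2$-minors $x_{ii}x_{jj}-x_{ij}^2$. With $[ij|kl]:=e_{ik}+e_{jl}-e_{il}-e_{jk}$, $L'_n$ is the lattice generated by the $[ij|ij]$; two points of a fiber are equivalent if their difference lies in $L'_n$ (equivalent monomials are equal in $R/J_n$). Define $p_n=\prod_{1\le i<j\le n-1}(x_{ij}x_{nn}+x_{in}x_{jn})$. If $n$ is odd, $p^+_{n,i}\in R/J_n$ is the sum of $x^{\mathbf a}$ over the equivalence classes $\mathbf a$ of $V_n^{-1}[(n-2,\dots,n-2)+e_i]$ modulo $L'_n$;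 if $n$ is even, $p^+_n\in R/J_n$ is the sum of $x^{\mathbf a}$ over the equivalence classes of $V_n^{-1}[(n-2,\dots,n-2)]$ modulo $L'_n$. *)

From HB Require Import structures.
From mathcomp Require Import all_boot all_order all_algebra.
From mathcomp Require Import mpoly.
Set Implicit Arguments. Unset Strict Implicit. Unset Printing Implicit Defensive.
Import GRing.Theory.
Local Open Scope ring_scope.

(* Index set {(i,j) : 1 <= i <= j <= n}, written 0-based as pairs of 'I_n. *)
Definition upair (n : nat) := {p : 'I_n * 'I_n | (p.1 <= p.2)%N}.

(* R = k[x_ij : i <= j], variables indexed via enum_rank of upair n *)
Definition Rn (k : fieldType) (n : nat) := {mpoly k[#|{: upair n}|]}.

Definition upair_of (n : nat) (i j : 'I_n) : upair n :=
  match leqP i j with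
  | LeqNotGtn h => exist _ (i, j) h
  | GtnNotLeq h => exist _ (j, i) (ltnW h)
  end.

(* x_ij = x_ji *)
Definition xv (k : fieldType) (n : nat) (i j : 'I_n) : Rn k n :=
  'X_(enum_rank (upair_of i j)).

(* x_ij for natural-number indices (0 if out of range) *)
Definition xN (k : fieldType) (n : nat) (i j : nat) : Rn k n :=
  match @insub _ (fun m => (m < n)%N) 'I_n i, @insub _ (fun m => (m < n)%N) 'I_n j with
  | Some i', Some j' => xv k i' j'
  | _, _ => 0
  end.

Definition expv (n : nat) := {ffun upair n -> nat}.
Definition mono (k : fieldType) (n : nat) (u : expv n) : Rn k n :=
  \prod_(p : upair n) ('X_(enum_rank p)) ^+ u p.

(* u in V_n^{-1}[b]: column jk of V_n is e_j + e_k *)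
Definition in_fiber (n : nat) (b : 'I_n -> nat) (u : expv n) : Prop :=
  forall r : 'I_n,
    (\sum_(p : upair n) u p * (((val p).1 == r) + ((val p).2 == r)))%N = b r.

(* the generator [ij|ij] = e_ii + e_jj - e_ij - e_ji = e_ii + e_jj - 2 e_ij,
   evaluated at coordinate q *)
Definition gen_ij (n : nat) (p q : upair n) : int :=
  ((val q == ((val p).1, (val p).1)) + (val q == ((val p).2, (val p).2)))%:Z
  - 2 * (val q == val p)%:Z.

(* u - v lies in L'_n = Z-span of the [ij|ij], i < j *)
Definition equivL (n : nat) (u v : expv n) : Prop :=
  exists c : upair n -> int,
    forall q : upair n,
      (u q)%:Z - (v q)%:Z
      = \sum_(p : upair n | ((val p).1 < (val p).2)%N) c p * gen_ij p q.

Definition reps (n : nat) (b : 'I_n -> nat) (S : seq (expv n)) : Prop :=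
  [/\ forall s, s \in S -> in_fiber b s,
      forall u, in_fiber b u -> exists2 s, s \in S & equivL u s
    & forall a c : nat, (a < size S)%N -> (c < size S)%N -> a <> c ->
        ~ equivL (nth [ffun => 0%N] S a) (nth [ffun => 0%N] S c)].

Definition inJ (k : fieldType) (n : nat) (f : Rn k n) : Prop :=
  exists c : 'I_n -> 'I_n -> Rn k n,
    f = \sum_(i < n) \sum_(j < n | (i < j)%N)
          c i j * (xv k i i * xv k j j - xv k i j ^+ 2).

Definition eqJ (k : fieldType) (n : nat) (f g : Rn k n) : Prop := inJ (f - g).

(* p_n = prod_{1 <= i < j <= n-1} (x_ij x_nn + x_in x_jn)  (0-based: i < j < n-1) *)
Definition pn (k : fieldType) (n : nat) : Rn k n :=
  \prod_(i < n) \prod_(j < n | (i < j)%N && (j < n.-1)%N)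
     (xv k i j * xN k n n.-1 n.-1 + xN k n i n.-1 * xN k n j n.-1).

Definition psum (k : fieldType) (n : nat) (S : seq (expv n)) : Rn k n :=
  \sum_(s <- S) mono k s.

From HB Require Import structures.
From mathcomp Require Import all_boot all_order all_algebra.
From mathcomp Require Import mpoly zify ring.
Set Implicit Arguments. Unset Strict Implicit. Unset Printing Implicit Defensive.
Import GRing.Theory.
Local Open Scope ring_scope.

(** Modulo the relations x_ij^2 = x_ii x_jj every monomial x^u equals a monomial
    x^v with the same degree vector V_n v whose off-diagonal exponents are the parities
    of those of u; as the diagonal exponents are then forced by V_n v, this normal form
    depends only on V_n u and the off-diagonal parities of u, which are also exactly the
    invariants of u modulo L'_n.  Expanding p_n = prod_(i<j<n) (x_ij x_nn + x_in x_jn)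
    gives one monomial per choice of a term in each factor, and after multiplication by
    x^z (z = 0, resp. z = e_in) all of them have degree vector b + 2t e_n.  At a vertex
    i < n the parity of the degree determines the parity of the exponent of x_in from
    those of the x_ij, j < n, so a class of the fiber of b is determined by its parities
    on the pairs i < j < n, i.e. by a choice; matching classes with choices and
    comparing normal forms gives x_nn^t p^+ = x^z p_n. *)

Section IdealJ.
Variables (k : fieldType) (n : nat).
Local Notation R := (Rn k n).
Implicit Types f g h : R.

Lemma inJ0 : inJ (0 : R).
Proof. by exists (fun _ _ => 0); rewrite big1 // => i _; rewrite big1 // => j _; rewrite mul0r. Qed.

Lemma inJD f g : inJ f -> inJ g -> inJ (f + g).
Proof.
move=> [c ->] [d ->]; exists (fun i j => c i j + d i j).
rewrite -big_split; apply: eq_bigr => i _; rewrite -big_split.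
by apply: eq_bigr => j _; rewrite mulrDl.
Qed.

Lemma inJMl g f : inJ f -> inJ (g * f).
Proof.
move=> [c ->]; exists (fun i j => g * c i j).
rewrite mulr_sumr; apply: eq_bigr => i _; rewrite mulr_sumr.
by apply: eq_bigr => j _; rewrite mulrA.
Qed.

Lemma inJ_minor (i j : 'I_n) : (i < j)%N -> inJ (xv k i i * xv k j j - xv k i j ^+ 2).
Proof.
move=> lt_ij; exists (fun a c => ((a == i) && (c == j))%:R).
rewrite (bigD1 i) //= (bigD1 j) ?lt_ij //= !eqxx mul1r.
rewrite big1 ?add0r => [|c /andP [_ /negbTE ->]]; last by rewrite mul0r.
rewrite big1 ?addr0 // => a /negbTE a_i; rewrite big1 // => c _.
by rewrite a_i mul0r.
Qed.

Lemma eqJ_refl f : eqJ f f.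
Proof. by rewrite /eqJ subrr; apply: inJ0. Qed.

Lemma eqJ_sym f g : eqJ f g -> eqJ g f.
Proof. by move=> /(inJMl (-1)); rewrite /eqJ mulN1r opprB. Qed.

Lemma eqJ_trans f g h : eqJ f g -> eqJ g h -> eqJ f h.
Proof. by move=> Jfg /(inJD Jfg); rewrite /eqJ addrA subrK. Qed.

Lemma eqJD f g f' g' : eqJ f f' -> eqJ g g' -> eqJ (f + g) (f' + g').
Proof. by move=> Jf /(inJD Jf); rewrite /eqJ; congr inJ; ring. Qed.

Lemma eqJMl h f g : eqJ f g -> eqJ (h * f) (h * g).
Proof. by move=> /(inJMl h); rewrite /eqJ mulrBr. Qed.

Lemma eqJ_sum (I : eqType) (r : seq I) (F G : I -> R) :
  {in r, forall i, eqJ (F i) (G i)} -> eqJ (\sum_(i <- r) F i) (\sum_(i <- r) G i).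
Proof.
move=> JFG; rewrite !big_seq; apply: big_ind2 => //; first exact: eqJ_refl.
by move=> *; apply: eqJD.
Qed.

End IdealJ.

Section Monomials.
Variables (k : fieldType) (n : nat).
Implicit Types (u v : expv n) (p q : upair n).

Definition evec p : expv n := [ffun q => (q == p) : nat].

Lemma evecE p q : evec p q = (q == p).
Proof. by rewrite ffunE. Qed.

Lemma expvD u v q : (u + v) q = (u q + v q)%N.
Proof. by rewrite ffunE. Qed.

Lemma expvMn u c q : (u *+ c) q = (u q * c)%N.
Proof. by rewrite ffunMnE; elim: c => [|c IH]; rewrite ?muln0 // mulrS mulnS IH. Qed.

Lemma monoD u v : mono k (u + v) = mono k u * mono k v.
Proof. by rewrite /mono -big_split; apply: eq_bigr => p _; rewrite expvD exprD. Qed.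

Lemma mono0 : mono k (0 : expv n) = 1.
Proof. by rewrite /mono big1 // => p _; rewrite ffunE expr0. Qed.

Lemma mono_sum (I : Type) (r : seq I) (P : pred I) (F : I -> expv n) :
  mono k (\sum_(i <- r | P i) F i) = \prod_(i <- r | P i) mono k (F i).
Proof. exact: (big_morph _ monoD mono0). Qed.

Lemma monoMn u c : mono k (u *+ c) = mono k u ^+ c.
Proof. by elim: c => [|c IH]; rewrite ?mulr0n ?mono0 // mulrS monoD IH exprS. Qed.

Lemma mono_evec p : mono k (evec p) = 'X_(enum_rank p).
Proof.
rewrite /mono (bigD1 p) //= big1 => [|q /negbTE q_p]; last by rewrite evecE q_p.
by rewrite evecE eqxx mulr1.
Qed.

End Monomials.

Section Fibers.
Variable n : nat.
Local Open Scope nat_scope.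
Implicit Types (u v : expv n) (p q : upair n) (r : 'I_n).

Definition offdiag p : bool := (val p).1 < (val p).2.
Definition diag r : upair n := upair_of r r.
Definition incid r p : nat := ((val p).1 == r) + ((val p).2 == r).
(* [Vn u] is V_n u, so that [in_fiber b u] is convertible to [Vn u =1 b]. *)
Definition Vn u r : nat := \sum_p u p * incid r p.

Lemma upair_ofK p : upair_of (val p).1 (val p).2 = p.
Proof.
case: p => [[i j] le_ij]; rewrite /upair_of /=.
case: leqP => lt_ji; apply: val_inj => //=.
by move: le_ij; rewrite leqNgt lt_ji.
Qed.

Lemma upair_of_val (i j : 'I_n) : i <= j -> val (upair_of i j) = (i, j).
Proof. by rewrite /upair_of; case: leqP => //; rewrite leqNgt => ->. Qed.

Lemma diag_val r : val (diag r) = (r, r).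
Proof. exact: upair_of_val. Qed.

Lemma offdiag_diag r : offdiag (diag r) = false.
Proof. by rewrite /offdiag diag_val ltnn. Qed.

Lemma offdiag_diagF p r : offdiag p -> (p == diag r) = false.
Proof. by move=> op; apply/negbTE; apply: contraTN op => /eqP ->; rewrite offdiag_diag. Qed.

Lemma diag_of_offdiagN p : ~~ offdiag p -> p = diag (val p).1.
Proof.
case: p => [[i j] le_ij] /=; rewrite /offdiag /= -leqNgt => le_ji; apply: val_inj.
by rewrite diag_val; congr pair; apply/val_inj/eqP; rewrite eqn_leq le_ij le_ji.
Qed.

Lemma incid_diag a r : incid r (diag a) = (a == r).*2.
Proof. by rewrite /incid diag_val; case: (a == r). Qed.

Lemma VnD u v r : Vn (u + v)%R r = Vn u r + Vn v r.
Proof. by rewrite /Vn -big_split; apply: eq_bigr => p _; rewrite expvD mulnDl. Qed.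

Lemma Vn0 r : Vn 0%R r = 0.
Proof. by rewrite /Vn big1 // => p _; rewrite ffunE. Qed.

Lemma Vn_sum (I : Type) (s : seq I) (P : pred I) (F : I -> expv n) r :
  Vn (\sum_(i <- s | P i) F i)%R r = \sum_(i <- s | P i) Vn (F i) r.
Proof. exact: (big_morph (Vn^~ r) (fun u v => VnD u v r) (Vn0 r)). Qed.

Lemma VnMn u c r : Vn (u *+ c)%R r = Vn u r * c.
Proof. by elim: c => [|c IH]; rewrite ?mulr0n ?Vn0 ?muln0 // mulrS VnD IH mulnS addnC. Qed.

Lemma Vn_evec p r : Vn (evec p) r = incid r p.
Proof.
rewrite /Vn (bigD1 p) //= big1 => [|q /negbTE q_p]; last by rewrite evecE q_p.
by rewrite evecE eqxx mul1n addn0.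
Qed.

Lemma Vn_split u r : Vn u r = (u (diag r)).*2 + \sum_(p | offdiag p) u p * incid r p.
Proof.
rewrite /Vn (bigID offdiag) /= addnC (bigD1 (diag r)) ?offdiag_diag //=.
rewrite incid_diag eqxx /= muln2 big1 ?addn0 // => p /andP [dp ne_pr].
have {}ne_pr : (val p).1 != r.
  by apply: contraNneq ne_pr => <-; rewrite -(diag_of_offdiagN dp).
by rewrite (diag_of_offdiagN dp) incid_diag (negbTE ne_pr) /= muln0.
Qed.

Lemma expv_eq_Vn u v : Vn u =1 Vn v ->
  (forall p, offdiag p -> u p = v p) -> u = v.
Proof.
move=> eqV eq_off; apply/ffunP => q; have [/eq_off //|dq] := boolP (offdiag q).
rewrite (diag_of_offdiagN dq); move: (eqV (val q).1); rewrite !Vn_split.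
have -> : \sum_(p | offdiag p) u p * incid (val q).1 p =
          \sum_(p | offdiag p) v p * incid (val q).1 p.
  by apply: eq_bigr => p /eq_off ->.
by move/addIn/eqP; rewrite -!muln2 eqn_pmul2r // => /eqP.
Qed.

Lemma odd_offdiag_extend u v : Vn u =1 Vn v ->
  (forall p, offdiag p -> (val p).2 < n.-1 -> odd (u p) = odd (v p)) ->
  forall p, offdiag p -> odd (u p) = odd (v p).
Proof.
move=> eqV odd_inner p op; have [/(odd_inner p op) //|last_p] := ltnP (val p).2 n.-1.
set i := (val p).1.
have ne21 : ((val p).2 == i) = false by rewrite -val_eqE (gtn_eqF op).
have incid_p : incid i p = 1 by rewrite /incid eqxx ne21.
have odd_rest q : offdiag q -> q != p -> odd (u q * incid i q) = odd (v q * incid i q).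
  move=> oq ne_qp; have [lt_q|last_q] := ltnP (val q).2 n.-1.
    by rewrite !oddM odd_inner.
  have eq2 : (val q).2 = (val p).2.
    by apply: ord_inj; have := ltn_ord (val q).2; have := ltn_ord (val p).2; lia.
  suff -> : incid i q = 0 by rewrite !muln0.
  rewrite /incid eq2 ne21 addn0; apply/eqP; rewrite eqb0.
  apply: contra ne_qp => /eqP eq1; apply/eqP/val_inj.
  by rewrite [val q]surjective_pairing [val p]surjective_pairing eq1 eq2.
move: (eqV i); rewrite !Vn_split (bigD1 p op) [in RHS](bigD1 p op) /= incid_p !muln1.
move=> /(congr1 odd); rewrite !oddD !odd_double /=.
suff -> : odd (\sum_(q | offdiag q && (q != p)) u q * incid i q) =
          odd (\sum_(q | offdiag q && (q != p)) v q * incid i q).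
  by move/addIb.
apply: (big_ind2 (fun x y => odd x = odd y)) => [//|x1 x2 y1 y2 e1 e2|q /andP []].
  by rewrite !oddD e1 e2.
exact: odd_rest.
Qed.

End Fibers.

Section Lattice.
Variable n : nat.
Implicit Types (u v : expv n) (p q : upair n).

Lemma gen_ij_offdiag p q : offdiag q -> gen_ij p q = - 2 * (q == p)%:Z.
Proof.
move=> oq; have ndiag a : (val q == (a, a)) = false.
  by apply: contraTF oq => /eqP e; rewrite /offdiag e ltnn.
by rewrite /gen_ij !ndiag mulNr sub0r.
Qed.

Lemma gen_ij_diag p a : offdiag p -> gen_ij p (diag a) = (incid a p)%:Z.
Proof.
move=> op; rewrite /gen_ij diag_val.
have -> : ((a, a) == val p) = false.
  by apply: contraTF op => /eqP e; rewrite /offdiag -e ltnn.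
rewrite mulr0 subr0 /incid; congr Posz.
by rewrite !xpair_eqE !andbb ![a == _]eq_sym.
Qed.

Lemma equivL_odd u v : equivL u v -> forall p, offdiag p -> odd (u p) = odd (v p).
Proof.
move=> [c eq_uv] p op; move: (eq_uv p).
rewrite (bigD1 p op) /= big1 ?addr0 => [|q /andP [_ ne_qp]]; last first.
  by rewrite gen_ij_offdiag // eq_sym (negbTE ne_qp) mulr0.
by rewrite gen_ij_offdiag // eqxx; lia.
Qed.

Lemma equivL_of_odd u v : Vn u =1 Vn v ->
  (forall p, offdiag p -> odd (u p) = odd (v p)) -> equivL u v.
Proof.
move=> eqV odd_uv; exists (fun p => (v p)./2%:Z - (u p)./2%:Z) => q.
rewrite (eq_bigl (@offdiag n)) //.
have [oq|dq] := boolP (offdiag q).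
  rewrite (bigD1 q oq) /= big1 ?addr0 => [|p /andP [_ ne_pq]]; last first.
    by rewrite gen_ij_offdiag // eq_sym (negbTE ne_pq) mulr0.
  by rewrite gen_ij_offdiag // eqxx; have := odd_uv q oq; lia.
rewrite (diag_of_offdiagN dq); set a := (val q).1.
rewrite (eq_bigr (fun p => ((v p)./2%:Z - (u p)./2%:Z) * (incid a p)%:Z)); last first.
  by move=> p op; rewrite gen_ij_diag.
have halves p : offdiag p -> ((v p)./2%:Z - (u p)./2%:Z) * 2 = (v p)%:Z - (u p)%:Z.
  by move=> op; have := odd_uv p op; lia.
apply: (@mulIf _ 2) => //; rewrite mulr_suml.
rewrite (eq_bigr (fun p => (v p * incid a p)%N%:Z - (u p * incid a p)%N%:Z)); last first.
  by move=> p op; rewrite mulrAC halves // mulrBl !PoszM.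
rewrite sumrB -!(big_morph Posz PoszD (erefl 0%:Z)).
have := eqV a; rewrite !Vn_split.
(* The sums occur in forms that are only convertible, so name them for [lia]. *)
set Su := (\sum_(p | offdiag p) u p * incid a p)%N.
by set Sv := (\sum_(p | offdiag p) v p * incid a p)%N; lia.
Qed.

End Lattice.

Section Reduction.
Variables (k : fieldType) (n : nat).
Implicit Types (u v : expv n) (p q : upair n).

Lemma eqJ_sqr_offdiag p : offdiag p ->
  eqJ (mono k (evec p *+ 2)) (mono k (evec (diag (val p).1) + evec (diag (val p).2))).
Proof.
move=> op; rewrite monoMn monoD !mono_evec.
have := inJMl (-1) (@inJ_minor k n (val p).1 (val p).2 op).
by rewrite /eqJ /xv /diag upair_ofK; congr inJ; ring.
Qed.

Lemma eqJ_mono_reduce u : exists v,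
  [/\ eqJ (mono k u) (mono k v), Vn v =1 Vn u & forall p, offdiag p -> v p = odd (u p)].
Proof.
pose offsum u := (\sum_(p | offdiag p) u p)%N.
have [N] := ubnP (offsum u); elim: N u => // N IH u /ltnSE le_uN.
have [p /andP [op two_p] | small] := pickP (fun p => offdiag p && (1 < u p)%N); last first.
  exists u; split=> // [|p op]; first exact: eqJ_refl.
  by move: (small p); rewrite op /=; case: (u p) => [|[|]].
pose w : expv n := [ffun q => u q - (q == p) * 2]%N.
have u_w : u = w + evec p *+ 2.
  apply/ffunP => q; rewrite expvD expvMn evecE ffunE.
  by case: eqP => [->|_]; rewrite ?subnK // subn0 addn0.
pose u' := w + (evec (diag (val p).1) + evec (diag (val p).2)).
have u'_off q : offdiag q -> u' q = w q.
  by move=> oq; rewrite !expvD !evecE !offdiag_diagF ?addn0.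
have offsum_u : offsum u = (offsum u' + 2)%N.
  rewrite /offsum (eq_bigr _ u'_off) {1}u_w.
  rewrite (eq_bigr (fun q => w q + (q == p) * 2)%N) => [|q _]; last first.
    by rewrite expvD expvMn evecE.
  rewrite big_split /=; congr addn.
  by rewrite (bigD1 p op) /= eqxx big1 // => q /andP [_ /negbTE ->].
have [|v [eqJ_v Vn_v odd_v]] := IH u'; first by move: le_uN; rewrite offsum_u addn2 => /ltnW.
exists v; split.
- apply: eqJ_trans eqJ_v; rewrite {1}u_w /u' monoD [mono k (w + _)]monoD.
  exact/eqJMl/eqJ_sqr_offdiag.
- by move=> r; rewrite Vn_v u_w /u' !VnD !Vn_evec !incid_diag -!addnn addnACA.
- by move=> q oq; rewrite odd_v // u'_off // u_w expvD expvMn oddD oddM /= andbF addbF.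
Qed.

End Reduction.

Lemma big_upair (R : Type) (idx : R) (op : Monoid.com_law idx) (n : nat)
    (C : pred ('I_n * 'I_n)) (F : 'I_n * 'I_n -> R) :
  (forall p, C p -> (p.1 <= p.2)%N) ->
  \big[op/idx]_(q : upair n | C (val q)) F (val q) = \big[op/idx]_(p | C p) F p.
Proof.
move=> le_C; rewrite [RHS](reindex_onto val (fun p => upair_of p.1 p.2)).
  by apply: eq_bigl => q; rewrite upair_ofK eqxx andbT.
by move=> p Cp; rewrite upair_of_val ?le_C //; case: p Cp.
Qed.

Section PairCounting.
Local Open Scope nat_scope.

Lemma sum_ltn_pairs1 N : \sum_(i < N) \sum_(j < N | i < j) 1 = 'C(N, 2).
Proof.
elim: N => [|N IH]; first by rewrite big_ord0.
rewrite big_ord_recr /= [X in _ + X]big1 => [|j]; last by rewrite ltnNge -ltnS ltn_ord.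
rewrite addn0 (eq_bigr (fun i : 'I_N => \sum_(j < N | i < j) 1 + 1)) => [|i _].
  by rewrite big_split /= IH sum_nat_const card_ord muln1 binS bin1 addnC.
by rewrite big_mkcond big_ord_recr /= -big_mkcond /= ltn_ord.
Qed.

Lemma sum_ord_eq N r : \sum_(i < N) (i == r :> nat) = (r < N).
Proof. by elim: N => [|N IH]; rewrite ?big_ord0 // big_ord_recr /= IH ltnS; case: ltngtP. Qed.

Lemma sum_ltn_pairs_incid N r :
  \sum_(i < N) \sum_(j < N | i < j) ((i == r :> nat) + (j == r :> nat)) =
  if r < N then N.-1 else 0.
Proof.
elim: N => [|N IH]; first by rewrite big_ord0.
rewrite big_ord_recr /= [X in _ + X]big1 => [|j]; last by rewrite ltnNge -ltnS ltn_ord.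
rewrite addn0 (eq_bigr (fun i : 'I_N =>
    \sum_(j < N | i < j) ((i == r :> nat) + (j == r :> nat)) +
    ((i == r :> nat) + (N == r :> nat)))) => [|i _]; last first.
  by rewrite big_mkcond big_ord_recr /= -big_mkcond /= ltn_ord.
rewrite big_split /= IH big_split /= sum_ord_eq sum_nat_const card_ord ltnS.
case: (ltngtP r N) => [lt_rN|_|_] /=; rewrite ?muln0 ?muln1 //.
by rewrite addn0 addn1 prednK // (leq_ltn_trans _ lt_rN).
Qed.

End PairCounting.

Lemma xN_ord (k : fieldType) (n : nat) (i j : 'I_n) : xN k n i j = xv k i j.
Proof.
rewrite /xN (insubT (fun x => x < n)%N (ltn_ord i)) (insubT (fun x => x < n)%N (ltn_ord j)).
by congr xv; apply: val_inj.
Qed.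

Section Expansion.
Variables (k : fieldType) (m : nat).
Local Notation n := m.+2.
Local Notation top := (@ord_max m.+1).
Implicit Types (p q : upair n) (f : {ffun upair n -> bool}).

(* The pairs i < j < n-1 (0-based) indexing the factors of p_n. *)
Definition inner p : bool := offdiag p && ((val p).2 < m.+1)%N.

Definition factor_exp q (b : bool) : expv n :=
  if b then evec q + evec (diag top)
  else evec (upair_of (val q).1 top) + evec (upair_of (val q).2 top).

Definition choice_exp q (b : bool) : expv n := if inner q then factor_exp q b else 0.

Definition pn_exp f : expv n := \sum_q choice_exp q (f q).

(* A choice of one term in each factor of p_n is a boolean function, false off [inner]. *)
Definition choice_dom q (b : bool) : bool := inner q || ~~ b.

Definition choice_of (s : expv n) : {ffun upair n -> bool} := [ffun q => inner q && odd (s q)].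

Lemma inner_offdiag p : inner p -> offdiag p.
Proof. by case/andP. Qed.

Lemma upair_of_top_val (i : 'I_n) : val (upair_of i top) = (i, top).
Proof. by rewrite upair_of_val // -ltnS. Qed.

Lemma inner_topF p (i : 'I_n) : inner p -> (p == upair_of i top) = false.
Proof.
move=> ip; apply: contraTF ip => /eqP ->.
by rewrite /inner upair_of_top_val ltnn andbF.
Qed.

Lemma pn_expand : pn k n = \sum_(f in family choice_dom) mono k (pn_exp f).
Proof.
pose C (p : 'I_n * 'I_n) := ((p.1 < p.2) && (p.2 < m.+1))%N.
pose g (p : 'I_n * 'I_n) := xv k p.1 p.2 * xv k top top + xv k p.1 top * xv k p.2 top.
have -> : pn k n = \prod_(q | inner q) g (val q).
  rewrite (@big_upair _ _ _ _ C g) => [|p /andP [/ltnW //]].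
  by rewrite /pn pair_big_dep; apply: eq_bigr => p _; rewrite /g -[m.+1]/(val top) !xN_ord.
rewrite big_mkcond (eq_bigr (fun q => \sum_(b | choice_dom q b) mono k (choice_exp q b))).
  by rewrite bigA_distr_big_dep; apply: eq_bigr => f _; rewrite mono_sum.
move=> q _; rewrite /choice_dom /choice_exp; case: (inner q) => /=.
  by rewrite big_bool /= !monoD !mono_evec /g /xv upair_ofK.
by rewrite big_mkcond big_bool /= mono0 add0r.
Qed.

Lemma pn_exp_inner f p : inner p -> pn_exp f p = f p.
Proof.
move=> ip; have op := inner_offdiag ip.
rewrite /pn_exp sum_ffunE (bigD1 p) //= big1 ?addr0 => [|q ne_qp].
  rewrite /choice_exp ip /factor_exp; case: (f p);
  by rewrite expvD !evecE ?eqxx ?(offdiag_diagF _ op) ?(inner_topF _ ip).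
rewrite /choice_exp; case: (inner q); last by rewrite ffunE.
case: (f q); rewrite expvD !evecE ?[p == q]eq_sym ?(negbTE ne_qp) //.
  by rewrite offdiag_diagF.
by rewrite !inner_topF.
Qed.

Lemma sum_inner (G : nat -> nat -> nat) :
  (\sum_(q | inner q) G (val q).1 (val q).2 =
   \sum_(i < m.+1) \sum_(j < m.+1 | i < j) G i j)%N.
Proof.
pose C (p : 'I_n * 'I_n) := ((p.1 < p.2) && (p.2 < m.+1))%N.
rewrite (@big_upair _ _ _ _ C (fun p : 'I_n * 'I_n => G p.1 p.2)) => [|p /andP [/ltnW //]].
rewrite -(pair_big_dep predT (fun i j : 'I_n => C (i, j)) (fun i j : 'I_n => G i j)) /=.
rewrite big_ord_recr /= [X in (_ + X)%N]big1 ?addn0 => [|j /andP [lt_j]]; last first.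
  by move/(ltn_trans lt_j); rewrite ltnn.
apply: eq_bigr => i _; rewrite big_mkcond big_ord_recr /C /= ltnn andbF addn0.
by rewrite [RHS]big_mkcond; apply: eq_bigr => j _; rewrite ltn_ord andbT.
Qed.

Lemma sum_incid_top : (\sum_(p | offdiag p) incid top p)%N = m.+1.
Proof.
rewrite (@big_upair _ _ _ _ (fun p : 'I_n * 'I_n => (p.1 < p.2)%N)
  (fun p : 'I_n * 'I_n => (p.1 == top :> nat) + (p.2 == top :> nat))%N) => [|p /ltnW //].
rewrite -(pair_big_dep predT (fun i j : 'I_n => (i < j)%N)
  (fun i j : 'I_n => (i == top :> nat) + (j == top :> nat))%N).
by rewrite (sum_ltn_pairs_incid n top) ltnSn.
Qed.

Lemma Vn_factor_exp q b r : inner q ->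
  Vn (factor_exp q b) r = (incid r q + (top == r).*2)%N.
Proof.
move=> ip; case: b; rewrite /factor_exp VnD !Vn_evec ?incid_diag //.
by rewrite /incid !upair_of_top_val /=; case: (_ == r); case: (_ == r); case: (_ == r).
Qed.

Lemma Vn_pn_exp f r : Vn (pn_exp f) r = (if r == top then 'C(m.+1, 2) * 2 else m)%N.
Proof.
rewrite /pn_exp Vn_sum (bigID inner) /= [X in (_ + X)%N]big1 ?addn0 => [|q /negbTE nq];
  last by rewrite /choice_exp nq Vn0.
pose incid_r (a b : nat) := ((a == r :> nat) + (b == r :> nat))%N.
pose one (a b : nat) := 1%N.
rewrite (eq_bigr (fun q =>
    incid_r (val q).1 (val q).2 + one (val q).1 (val q).2 * (top == r).*2)%N);
  last by move=> q iq; rewrite /choice_exp iq Vn_factor_exp // mul1n.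
rewrite big_split -big_distrl !sum_inner /incid_r /one sum_ltn_pairs_incid sum_ltn_pairs1.
have [->|ne_r] := eqVneq r top; first by rewrite ltnn /= add0n.
rewrite /= muln0 addn0 ltn_neqAle -ltnS ltn_ord andbT.
by rewrite -val_eqE /= in ne_r; rewrite ne_r.
Qed.

End Expansion.

Section FiberSum.
Variables (k : fieldType) (m : nat).
Local Notation n := m.+2.
Local Notation top := (@ord_max m.+1).
Variables (b : 'I_n -> nat) (t : nat) (z : expv n).
Hypothesis z_inner : forall p, inner p -> z p = 0%N.
(* With [Vn_pn_exp], every monomial of x^z p_n has degree vector b + 2t e_top. *)
Hypothesis Vn_z : forall r,
  (Vn z r + (if r == top then 'C(m.+1, 2) * 2 else m) = b r + (top == r) * t.*2)%N.
Hypothesis b_top : (m <= b top)%N.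

Local Notation shift := (evec (diag top) *+ t).
Local Notation choices := (family (@choice_dom m)).
Local Notation choice_of := (@choice_of m).

Lemma Vn_shift r : Vn shift r = ((top == r) * t.*2)%N.
Proof. by rewrite VnMn Vn_evec incid_diag -doubleMl doubleMr. Qed.

Lemma Vn_pn_exp_z f r : Vn (pn_exp f + z) r = (b r + (top == r) * t.*2)%N.
Proof. by rewrite VnD Vn_pn_exp addnC Vn_z. Qed.

Lemma eqJ_mono_shift s : in_fiber b s ->
  eqJ (mono k (s + shift)) (mono k (pn_exp (choice_of s) + z)).
Proof.
move=> fib_s.
have [v1 [eqJ1 Vn1 odd1]] := eqJ_mono_reduce k (s + shift).
have [v2 [eqJ2 Vn2 odd2]] := eqJ_mono_reduce k (pn_exp (choice_of s) + z).
have Vn_eq r : Vn (s + shift) r = Vn (pn_exp (choice_of s) + z) r.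
  by rewrite Vn_pn_exp_z VnD Vn_shift (fib_s r : Vn s r = b r).
have odd_eq : forall p : upair n, offdiag p ->
    odd ((s + shift)%R p) = odd ((pn_exp (choice_of s) + z)%R p).
  apply: (odd_offdiag_extend Vn_eq) => p op lt_p; have ip : inner p by apply/andP.
  rewrite !expvD expvMn evecE offdiag_diagF // z_inner // pn_exp_inner //.
  by rewrite ffunE ip !addn0 oddb.
suff eq_v : v1 = v2 by apply: eqJ_trans eqJ1 _; rewrite eq_v; apply: eqJ_sym.
apply: expv_eq_Vn => [r|p op]; first by rewrite Vn1 Vn2 Vn_eq.
by rewrite odd1 // odd2 // odd_eq.
Qed.

Lemma choice_of_onto S f : reps b S -> f \in choices -> f \in map choice_of S.
Proof.
case=> _ S_all _ f_dom.
have [v [eqJ_v Vn_v odd_v]] := eqJ_mono_reduce k (pn_exp f + z).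
have t_le : (t <= v (diag top))%N.
  have := Vn_split v top; rewrite Vn_v Vn_pn_exp_z eqxx mul1n.
  have : (\sum_(p | offdiag p) v p * incid top p <= m.+1)%N.
    rewrite -[X in (_ <= X)%N]sum_incid_top; apply: leq_sum => p op.
    by rewrite odd_v //; case: (odd _); rewrite ?mul1n ?mul0n.
  by set S_top := (\sum_(p | _) _)%N; lia.
pose u : expv n := [ffun q => v q - (q == diag top) * t]%N.
have v_u : v = u + shift.
  apply/ffunP => q; rewrite expvD expvMn evecE ffunE.
  by case: eqP => [->|_]; rewrite ?mul1n ?subnK // mul0n subn0 addn0.
have fib_u : in_fiber b u.
  by move=> r; have := Vn_v r; rewrite Vn_pn_exp_z v_u VnD Vn_shift => /addIn.
have [s s_S equiv_us] := S_all u fib_u.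
apply/mapP; exists s => //; apply/ffunP => q; rewrite ffunE.
have [iq|niq] := boolP (inner q); last first.
  by move/familyP: f_dom => /(_ q); rewrite unfold_in /choice_dom (negbTE niq) => /negbTE.
rewrite /= -(equivL_odd equiv_us (inner_offdiag iq)).
have -> : u q = v q by rewrite ffunE offdiag_diagF ?inner_offdiag // mul0n subn0.
by rewrite odd_v ?inner_offdiag // oddb expvD z_inner // addn0 pn_exp_inner // oddb.
Qed.

Lemma choice_of_uniq S : reps b S -> uniq (map choice_of S).
Proof.
case=> S_fib _ S_distinct; apply/(uniqP (choice_of [ffun => 0%N])) => a c.
rewrite !inE size_map => lt_a lt_c; rewrite !(nth_map [ffun => 0%N]) // => eq_ac.
apply/eqP/negPn/negP => /eqP ne_ac; apply: (S_distinct a c lt_a lt_c ne_ac).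
set sa := nth _ S a in eq_ac *; set sc := nth _ S c in eq_ac *.
have Vn_ac : Vn sa =1 Vn sc.
  move=> r; rewrite (S_fib _ (mem_nth _ lt_a) r : Vn sa r = b r).
  by rewrite (S_fib _ (mem_nth _ lt_c) r : Vn sc r = b r).
apply: (equivL_of_odd Vn_ac); apply: (odd_offdiag_extend Vn_ac) => p op lt_p.
have ip : inner p by apply/andP.
by move/ffunP/(_ p): eq_ac; rewrite !ffunE ip.
Qed.

Lemma eqJ_psum_pn S : reps b S -> eqJ (xv k top top ^+ t * psum k S) (mono k z * pn k n).
Proof.
move=> S_reps; have [S_fib _ _] := S_reps.
have -> : xv k top top ^+ t * psum k S = \sum_(s <- S) mono k (s + shift).
  by rewrite /psum mulr_sumr; apply: eq_bigr => s _; rewrite monoD monoMn mono_evec mulrC.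
have -> : mono k z * pn k n = \sum_(f in choices) mono k (pn_exp f + z).
  by rewrite pn_expand mulr_sumr; apply: eq_bigr => f _; rewrite monoD mulrC.
apply: (eqJ_trans (g := \sum_(s <- S) mono k (pn_exp (choice_of s) + z))).
  by apply: eqJ_sum => s /S_fib; apply: eqJ_mono_shift.
have perm_S : perm_eq (map choice_of S) (enum choices).
  apply: uniq_perm; [exact: choice_of_uniq | exact: enum_uniq | move=> f].
  rewrite mem_enum; apply/idP/idP => [/mapP [s _ ->]|]; last exact: choice_of_onto.
  by apply/familyP => q; rewrite unfold_in /choice_dom ffunE; case: (inner q).
by rewrite -big_enum -(perm_big _ perm_S) big_map; apply: eqJ_refl.
Qed.

End FiberSum.

Lemma double_sigma m :
  (('C(m.+1, 2) - (m.+1)./2).*2 + m.+1 = 'C(m.+1, 2).*2 + odd m.+1)%N.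
Proof.
have half_le : ((m.+1)./2 <= 'C(m.+1, 2))%N.
  by rewrite binS bin1; apply: leq_trans (leq_addl _ _); have := odd_double_half m.+1; lia.
by have := odd_double_half m.+1; lia.
Qed.

Theorem lemma2p17 (k : fieldType) (n : nat) (Hn : (2 <= n)%N) :
  let sigma := ('C(n.-1, 2) - (n.-1)./2)%N in
  (~~ odd n ->
     forall S : seq (expv n), reps (fun _ => (n - 2)%N) S ->
       eqJ (xN k n n.-1 n.-1 ^+ sigma * psum k S) (pn k n)) /\
  (odd n ->
     forall (i : 'I_n) (S : seq (expv n)),
       reps (fun r : 'I_n => (n - 2 + (r == i))%N) S ->
       eqJ (xN k n n.-1 n.-1 ^+ sigma.+1 * psum k S)
           (xN k n i n.-1 * pn k n)).
Proof.
case: n Hn => [|[|m]] // _ sigma.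
have dsigma := double_sigma m; rewrite /= in sigma dsigma *.
have m2 : (m.+2 - 2 = m)%N by rewrite subSS subSS subn0.
rewrite (xN_ord k ord_max ord_max); split=> [even_m S S_reps | odd_m i S S_reps].
- rewrite -[pn k _]mul1r -(mono0 k m.+2).
  apply: (@eqJ_psum_pn k m (fun=> (m.+2 - 2)%N) sigma 0 _ _ _ S S_reps) => [p _|r|];
    rewrite ?ffunE ?m2 //.
  rewrite Vn0 eq_sym; case: eqP => _ /=; rewrite ?mul0n ?addn0 ?mul1n //.
  by rewrite negbK in even_m; rewrite /sigma; lia.
- rewrite (xN_ord k i ord_max) [xv k i _]/xv -mono_evec.
  apply: (@eqJ_psum_pn k m (fun r => (m.+2 - 2 + (r == i))%N) sigma.+1 _ _ _ _ S S_reps)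
    => [p|r|]; rewrite ?m2.
  + by move=> ip; rewrite evecE inner_topF.
  + rewrite Vn_evec /incid upair_of_top_val /= [r == ord_max]eq_sym [r == i]eq_sym.
    have [<-|_] := eqVneq ord_max r; last by rewrite /=; lia.
    by rewrite mul1n /sigma; case: (i == ord_max) => /=; lia.
  + exact: leq_addr.
Qed.
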